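(* Let $\mathcal{P}$ be a profile of unrooted phylogenetic trees whose display graph $G(\mathcal{P})$ is connected. Then $G(\mathcal{P})$ has a complete set of pairwise parallel nice minimal cuts if and only if it has a complete set of pairwise parallel legal minimal cuts.
   Context: A phylogenetic tree is an unrooted tree whose leaves are bijectively labeled (leaves identified with labels; internal vertices have degree at least three). A profile $\mathcal{P}=\{T_1,\dots,T_k\}$ is a finite collection of phylogenetic trees; internal vertices of distinct trees are disjoint, while leaves with the same label are the same vertex. The display graph $G(\mathcal{P})$ has vertex set $\bigcup_i V(T_i)$ and edge set $\bigcup_i E(T_i)$. An edge of an input tree is internal if both endpoints are internal (non-leaf) vertices. For a vertex $u$ of an input tree, $\mathrm{Inc}(u)$ is the set of edges of $G(\mathcal{P})$ incident with $u$. A cut of a connected graph $G$ is $F\subseteq E(G)$ with $G-F$ (same vertices, edges of $F$ removed) disconnected; minimal if no proper subset is a cut. Minimal cuts $F,F'$ are parallel if $G-F$ has at most one connected component $H$ with $E(H)\cap F'\neq\emptyset$. A cut $F$ of $G(\mathcal{P})$ is legal if for every $T\in\mathcal{P}$ there is $u\in V(T)$ with $F\cap E(T)\subseteq\mathrm{Inc}(u)$; nice if legal and every component of $G(\mathcal{P})-F$ contains at least one edge. A set $\mathcal{F}$ of cuts of $G(\mathcal{P})$ is complete if for every $T\in\mathcal{P}$ and every internal edge $e$ of $T$ there is $F\in\mathcal{F}$ with $F\cap E(T)=\{e\}$. *)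

From mathcomp Require Import all_boot.
Set Implicit Arguments. Unset Strict Implicit. Unset Printing Implicit Defensive.

Section Graphs.
Variable V : finType.

(* Edges are 2-element vertex sets; a graph on all of V is given by its edge set. *)
Definition adjE (E : {set {set V}}) : rel V := fun x y => [set x; y] \in E.

Definition gconnected (E : {set {set V}}) : Prop :=
  forall x y : V, connect (adjE E) x y.

Definition comp (E : {set {set V}}) (x : V) : {set V} :=
  [set y | connect (adjE E) x y].

Definition components (E : {set {set V}}) : {set {set V}} :=
  [set comp E x | x : V].

Definition comp_edges (E : {set {set V}}) (H : {set V}) : {set {set V}} :=
  [set e in E | e \subset H].

(* A profile is k trees; tree i has vertex set VT i and edge set ET i,
   all living in the common vertex type V (shared vertices = leaves with
   the same label). *)
Variables (k : nat) (VT : 'I_k -> {set V}) (ET : 'I_k -> {set {set V}}).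

Definition deg (i : 'I_k) (v : V) : nat := #|[set e in ET i | v \in e]|.

Definition is_leaf (i : 'I_k) (v : V) : bool := (v \in VT i) && (deg i v <= 1).
Definition is_internal (i : 'I_k) (v : V) : bool := (v \in VT i) && ~~ is_leaf i v.

Definition is_tree (i : 'I_k) : Prop :=
  [/\ VT i != set0,
      (forall e, e \in ET i -> #|e| = 2 /\ e \subset VT i),
      (forall x y, x \in VT i -> y \in VT i -> connect (adjE (ET i)) x y) &
      (* acyclic: no edge lies on a cycle *)
      (forall e x y, e \in ET i -> e = [set x; y] ->
          ~~ connect (adjE (ET i :\ e)) x y)].

Definition is_phylo_tree (i : 'I_k) : Prop :=
  is_tree i /\ (forall v, is_internal i v -> 3 <= deg i v).

Definition is_profile : Prop :=
  [/\ (forall i, is_phylo_tree i),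
      (forall i j v, i != j -> v \in VT i -> v \in VT j -> is_leaf i v /\ is_leaf j v) &
      (* vertex set of the display graph is the union of the trees' vertex sets *)
      (forall v, exists i, v \in VT i)].

Definition EG : {set {set V}} := \bigcup_(i < k) ET i.

Definition Inc (u : V) : {set {set V}} := [set e in EG | u \in e].

Definition is_cut (F : {set {set V}}) : Prop :=
  F \subset EG /\ ~ gconnected (EG :\: F).

Definition minimal_cut (F : {set {set V}}) : Prop :=
  is_cut F /\ (forall F' : {set {set V}}, F' \proper F -> ~ is_cut F').

Definition parallel (F F' : {set {set V}}) : Prop :=
  forall H1 H2, H1 \in components (EG :\: F) -> H2 \in components (EG :\: F) ->
    comp_edges (EG :\: F) H1 :&: F' != set0 ->
    comp_edges (EG :\: F) H2 :&: F' != set0 -> H1 = H2.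

Definition legal (F : {set {set V}}) : Prop :=
  forall i : 'I_k, exists2 u, u \in VT i & F :&: ET i \subset Inc u.

Definition nice (F : {set {set V}}) : Prop :=
  legal F /\ (forall H, H \in components (EG :\: F) ->
                 comp_edges (EG :\: F) H != set0).

Definition internal_edge (i : 'I_k) (e : {set V}) : Prop :=
  e \in ET i /\ (forall v, v \in e -> is_internal i v).

Definition complete (Fs : {set {set {set V}}}) : Prop :=
  (forall F, F \in Fs -> is_cut F) /\
  (forall i e, internal_edge i e -> exists2 F, F \in Fs & F :&: ET i = [set e]).

Definition pairwise_parallel (Fs : {set {set {set V}}}) : Prop :=
  forall F F', F \in Fs -> F' \in Fs -> F != F' -> parallel F F'.

End Graphs.

From Pilot Require Import Defs.
From mathcomp Require Import all_boot.

(* Nice cuts are legal, so only the converse needs an argument: keep the nice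
   cuts of a complete parallel family of legal minimal cuts. Parallelism passes
   to subfamilies, and completeness survives because a minimal cut F meeting a
   tree T exactly in an internal edge e is nice: if the component of x in
   G(P) - F had no edge, every edge at x would lie in F, so Inc x would be a
   cut inside F, hence equal to F by minimality; then x is an endpoint of e,
   an internal vertex of T, and its at least three T-edges all lie in
   F :&: E(T) = {e}. *)

Set Implicit Arguments. Unset Strict Implicit. Unset Printing Implicit Defensive.

Section ComponentEdges.
Variable V : finType.
Implicit Types (E : {set {set V}}) (x y : V).

Definition components_have_edges E : bool :=
  [forall H in components E, comp_edges E H != set0].

Lemma components_have_edgesP E :
  reflect (forall H, H \in components E -> comp_edges E H != set0)
          (components_have_edges E).
Proof.
apply: (iffP forallP) => [Hall H HE | Hall H].
  by have /implyP := Hall H; apply.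
by apply/implyP; apply: Hall.
Qed.

Lemma comp_edges_comp_neq0 E x f :
  f \in E -> x \in f -> #|f| = 2 -> comp_edges E (Defs.comp E x) != set0.
Proof.
move=> fE xf /eqP/cards2P [a [b [_ fab]]].
have [y def_f] : exists y, f = [set x; y].
  move: xf; rewrite fab !inE => /orP [] /eqP ->; first by exists b.
  by exists a; rewrite setUC.
have y_comp : y \in Defs.comp E x by rewrite inE; apply: connect1; rewrite /adjE -def_f.
apply/set0Pn; exists f; rewrite inE fE /=.
apply/subsetP => z; rewrite def_f !inE => /orP [] /eqP -> //.
by move: y_comp; rewrite inE.
Qed.

Lemma connect_isolated E x y :
  (forall f, f \in E -> x \notin f) -> connect (adjE E) x y -> y = x.
Proof.
move=> x_isolated /connectP [[|z p] /=]; first by move=> _ ->.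
case/andP=> xz _ _; have := x_isolated _ xz.
by rewrite !inE eqxx.
Qed.

End ComponentEdges.

Section Profile.
Variables (V : finType) (k : nat) (VT : 'I_k -> {set V}) (ET : 'I_k -> {set {set V}}).
Hypothesis profileP : is_profile VT ET.

Local Notation EG := (EG ET).
Local Notation Inc := (Inc ET).

Lemma minimal_cut_eq F G : minimal_cut ET F -> is_cut ET G -> G \subset F -> G = F.
Proof.
case=> _ Fmin Gcut GF; case: (eqVneq G F) => // GneF.
by case: (Fmin G); rewrite // properEneq GneF GF.
Qed.

Lemma profile_edge_card2 f : f \in EG -> #|f| = 2.
Proof.
case: profileP => trees _ _ /bigcupP [i _ fi].
by case: (trees i) => [[_ edges _ _] _]; case: (edges f fi).
Qed.

Lemma deg_Inc i x : deg ET i x = #|Inc x :&: ET i|.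
Proof.
apply: eq_card => f; rewrite !inE.
case fi: (f \in ET i); rewrite ?andbF //= andbT.
by have -> : f \in EG by apply/bigcupP; exists i.
Qed.

Lemma Inc_is_cut x f : f \in EG -> is_cut ET (Inc x).
Proof.
move=> fEG; split; first by apply/subsetP => g; rewrite inE => /andP [].
have /eqP/cards2P [a [b [ab _]]] := profile_edge_card2 fEG.
have [w wx] : exists w, w != x.
  by case: (eqVneq a x) => [ax|]; [exists b; rewrite -ax eq_sym | exists a].
have x_isolated g : g \in EG :\: Inc x -> x \notin g.
  by rewrite !inE => /andP [g_notin_Inc gEG]; rewrite gEG in g_notin_Inc.
move=> connected; have w_eq_x := connect_isolated x_isolated (connected x w).
by rewrite w_eq_x eqxx in wx.
Qed.

Lemma Inc_subset_of_edgeless_comp F x :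
  comp_edges (EG :\: F) (Defs.comp (EG :\: F) x) = set0 -> Inc x \subset F.
Proof.
move=> no_edges; apply/subsetP => f; rewrite inE => /andP [fEG xf].
apply/negPn/negP => fF.
have fE : f \in EG :\: F by rewrite inE fF fEG.
by have := comp_edges_comp_neq0 fE xf (profile_edge_card2 fEG); rewrite no_edges eqxx.
Qed.

Lemma minimal_cut_components_have_edges F i e :
  minimal_cut ET F -> internal_edge VT ET i e -> F :&: ET i = [set e] ->
  components_have_edges (EG :\: F).
Proof.
move=> Fmin [ei e_internal] FTe; apply/components_have_edgesP => _ /imsetP [x _ ->].
apply/negP => /eqP no_edges.
have eEG : e \in EG by apply/bigcupP; exists i.
have IncF : Inc x = F.
  exact: minimal_cut_eq Fmin (Inc_is_cut x eEG) (Inc_subset_of_edgeless_comp no_edges).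
have : e \in Inc x by rewrite IncF; move: (set11 e); rewrite -FTe => /setIP [].
rewrite inE => /andP [_ /e_internal x_internal].
case: profileP => trees _ _; case: (trees i) => _ /(_ x x_internal).
by rewrite deg_Inc IncF FTe cards1.
Qed.

Lemma legal_nice F : legal VT ET F -> components_have_edges (EG :\: F) -> nice VT ET F.
Proof. by move=> Flegal /components_have_edgesP. Qed.

End Profile.

Lemma pairwise_parallelS (V : finType) (k : nat) (ET : 'I_k -> {set {set V}})
    (Fs Gs : {set {set {set V}}}) :
  Gs \subset Fs -> pairwise_parallel ET Fs -> pairwise_parallel ET Gs.
Proof. by move=> /subsetP GsFs Fs_par F F' /GsFs FFs /GsFs; apply: Fs_par. Qed.

Theorem lemma8 (V : finType) (k : nat) (VT : 'I_k -> {set V})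
    (ET : 'I_k -> {set {set V}}) :
  is_profile VT ET ->
  gconnected (EG ET) ->
  (exists Fs : {set {set {set V}}},
      [/\ complete VT ET Fs, pairwise_parallel ET Fs &
          forall F, F \in Fs -> nice VT ET F /\ minimal_cut ET F]) <->
  (exists Fs : {set {set {set V}}},
      [/\ complete VT ET Fs, pairwise_parallel ET Fs &
          forall F, F \in Fs -> legal VT ET F /\ minimal_cut ET F]).
Proof.
move=> profileP _; split.
  by case=> Fs [Fs_complete Fs_par Fs_nice]; exists Fs; split=> // F /Fs_nice [[]].
case=> Fs [[Fs_cuts Fs_covers] Fs_par Fs_legal].
set Gs := [set F in Fs | components_have_edges (EG ET :\: F)].
have GsFs : Gs \subset Fs by apply/subsetP => F; rewrite inE => /andP [].
exists Gs; split.
- split=> [F /(subsetP GsFs) /Fs_cuts // | i e ie].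
  have [F FFs FTe] := Fs_covers i e ie; exists F => //.
  rewrite inE FFs /=; have [_ Fmin] := Fs_legal F FFs.
  exact: (minimal_cut_components_have_edges profileP Fmin ie FTe).
- exact: pairwise_parallelS GsFs Fs_par.
- move=> F; rewrite inE => /andP [/Fs_legal [Flegal Fmin] F_edges].
  by split=> //; apply: legal_nice.
Qed.
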